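(* Let $\{\alpha_k\}_{k=0}^n$ be arbitrary nonzero real numbers with $n\ge1$. Then there exist $b>0$, $\zeta\in\mathbb{R}$, and a $\sigma\in\Sigma_{1,b}$ such that $(\zeta,\{(\alpha_k,1,k)\}_{k=0}^n)$ is an affine symmetry of $\sigma$.
   Context: For $a,b>0$, $\Sigma_{a,b}$ is the class of meromorphic functions on $\mathbb{C}$ of the form $\sigma(z)=C+\sum_{k\in\mathbb{Z}}c_k[\mathrm{sgn}(k)+\tanh(\pi b^{-1}(z-ka))]$ with $C\in\mathbb{C}$, $\{c_k\}\subset\mathbb{C}$, $\sup_k|c_k|e^{-\pi a'|k|/b}<\infty$ for some $a'\in(0,a)$, at least one $c_k\ne0$, and $\mathrm{sgn}(0)=0$. An affine symmetry of $\sigma$ (viewed as a function on $\mathbb{R}$) is $(\zeta,\{(\alpha_s,\beta_s,\gamma_s)\}_{s\in\mathcal{I}})$ with $\mathcal{I}$ nonempty finite, real entries, such that $\sum_s\alpha_s\sigma(\beta_st+\gamma_s)=\zeta$ for all $t\in\mathbb{R}$, and there is no proper subset $\mathcal{I}'\subsetneq\mathcal{I}$ for which $\{\sigma(\beta_s\cdot+\gamma_s):s\in\mathcal{I}'\}\cup\{\mathbf1\}$ is linearly dependent as functions $\mathbb{R}\to\mathbb{C}$. *)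

From Stdlib Require Import Reals ZArith Lra.
From Coquelicot Require Import Coquelicot.
Open Scope R_scope.

Definition sgnZ (k : Z) : R := IZR (Z.sgn k).

(* Sum over Z: both halves (k >= 0 and k < 0) converge, with total l.
   (Under the growth condition of Sigma_{a,b} the series converges absolutely,
   so this is the unambiguous value of sum_{k in Z}.) *)
Definition is_zsum (u : Z -> C) (l : C) : Prop :=
  exists l1 l2 : C,
    is_series (fun n : nat => u (Z.of_nat n)) l1 /\
    is_series (fun n : nat => u (- Z.of_nat (S n))%Z) l2 /\
    l = Cplus l1 l2.

Definition sigma_term (a b : R) (c : Z -> C) (t : R) (k : Z) : C :=
  Cmult (c k) (RtoC (sgnZ k + tanh (PI / b * (t - IZR k * a)))).

Definition in_Sigma (a b : R) (sigma : R -> C) : Prop :=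
  0 < a /\ 0 < b /\
  exists (C0 : C) (c : Z -> C),
    (exists a' : R, 0 < a' < a /\
       exists M : R, forall k : Z,
         Cmod (c k) * exp (- PI * a' * IZR (Z.abs k) / b) <= M) /\
    (exists k : Z, c k <> RtoC 0) /\
    (forall t : R, exists l : C,
        is_zsum (sigma_term a b c t) l /\ sigma t = Cplus C0 l).

Fixpoint csum (f : nat -> C) (m : nat) : C :=
  match m with
  | O => RtoC 0
  | S m' => Cplus (csum f m') (f m')
  end.

(* The family {fs s : s in P} (P a subset of {0,..,m-1}) together with the
   constant function 1 is linearly dependent over C, as functions R -> C. *)
Definition lin_dep_with_one (m : nat) (P : nat -> Prop) (fs : nat -> R -> C) : Prop :=
  exists (lam : nat -> C) (mu : C),
    (forall s, ~ P s -> lam s = RtoC 0) /\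
    (mu <> RtoC 0 \/ exists s, (s < m)%nat /\ P s /\ lam s <> RtoC 0) /\
    (forall t : R, Cplus mu (csum (fun s => Cmult (lam s) (fs s t)) m) = RtoC 0).

Definition affine_symmetry (sigma : R -> C) (zeta : R) (m : nat)
    (alpha beta gamma : nat -> R) : Prop :=
  (0 < m)%nat /\
  (forall t : R,
      csum (fun s => Cmult (RtoC (alpha s)) (sigma (beta s * t + gamma s))) m
      = RtoC zeta) /\
  ~ (exists P : nat -> Prop,
        (forall s, P s -> (s < m)%nat) /\
        (exists s, (s < m)%nat /\ ~ P s) /\
        lin_dep_with_one m P (fun s t => sigma (beta s * t + gamma s))).

From Stdlib Require Import Reals ZArith Lra Lia.
From Coquelicot Require Import Coquelicot.
Open Scope R_scope.

(* Solve the recurrence sum_j alpha_j c_(k+j) = 0 on all of Z (possible because alpha_0 and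
   alpha_n are nonzero), starting from the window c_0 = 1, c_1 = ... = c_(n-1) = 0, and put
   sigma(t) = sum_k c_k [sgn k + tanh (tau (t - k))].  Reindexing k -> k + s in
   sum_s alpha_s sigma(t + s), the tanh parts are multiplied by sum_s alpha_s c_(k+s) = 0, so
   only a constant survives.  For minimality, a relation mu + sum_s lambda_s sigma(t + s) = 0
   may be normalised to lambda_n = 0.  Taking differences across [j - 1/2, j + 1/2] gives
   sum_k d_k psi(k - j) = 0 for d_k = sum_s lambda_s c_(k+s), where psi is the increment of
   one tanh over a unit interval; once tau is large compared to the exponential growth of c,
   psi is so concentrated at 0 that this forces d = 0, and the initial window then makes
   lambda = 0 by a triangular argument. *)

Definition is_zseries (u : Z -> R) (l : R) : Prop :=
  exists l1 l2 : R,
    is_series (fun n : nat => u (Z.of_nat n)) l1 /\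
    is_series (fun n : nat => u (- Z.of_nat (S n))%Z) l2 /\ l = l1 + l2.

Definition zseries (u : Z -> R) : R :=
  Series (fun n : nat => u (Z.of_nat n)) + Series (fun n : nat => u (- Z.of_nat (S n))%Z).

Lemma is_zseries_unique u l : is_zseries u l -> zseries u = l.
Proof.
  intros (l1 & l2 & H1 & H2 & ->). unfold zseries.
  now rewrite (is_series_unique _ _ H1), (is_series_unique _ _ H2).
Qed.

Lemma is_zseries_ext u v l : (forall k, u k = v k) -> is_zseries u l -> is_zseries v l.
Proof.
  intros E (l1 & l2 & H1 & H2 & ->). exists l1, l2.
  split; [|split]; auto; eapply is_series_ext; eauto; intros; apply E.
Qed.

Lemma is_zseries_plus u v lu lv :
  is_zseries u lu -> is_zseries v lv -> is_zseries (fun k => u k + v k) (lu + lv).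
Proof.
  intros (a1 & a2 & Ha1 & Ha2 & ->) (b1 & b2 & Hb1 & Hb2 & ->).
  exists (a1 + b1), (a2 + b2). split; [|split].
  - exact (is_series_plus _ _ _ _ Ha1 Hb1).
  - exact (is_series_plus _ _ _ _ Ha2 Hb2).
  - ring.
Qed.

Lemma is_zseries_scal a u l : is_zseries u l -> is_zseries (fun k => a * u k) (a * l).
Proof.
  intros (l1 & l2 & H1 & H2 & ->). exists (a * l1), (a * l2). split; [|split].
  - exact (is_series_scal_l (V := R_NormedModule) a _ _ H1).
  - exact (is_series_scal_l (V := R_NormedModule) a _ _ H2).
  - ring.
Qed.

Lemma is_zseries_minus u v lu lv :
  is_zseries u lu -> is_zseries v lv -> is_zseries (fun k => u k - v k) (lu - lv).
Proof.
  intros Hu Hv. apply (is_zseries_ext (fun k => u k + -1 * v k)); [intros; ring|].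
  replace (lu - lv) with (lu + -1 * lv) by ring.
  now apply is_zseries_plus, is_zseries_scal.
Qed.

Lemma is_zseries_sum (N : nat) (a : nat -> R) (u : nat -> Z -> R) (l : nat -> R) :
  (forall s, (s <= N)%nat -> is_zseries (u s) (l s)) ->
  is_zseries (fun k => sum_f_R0 (fun s => a s * u s k) N) (sum_f_R0 (fun s => a s * l s) N).
Proof.
  induction N as [|N IH]; intros H; simpl.
  - apply is_zseries_scal, H; lia.
  - apply is_zseries_plus; [apply IH; intros; apply H; lia | apply is_zseries_scal, H; lia].
Qed.

Lemma is_zseries_succ u l : is_zseries u l -> is_zseries (fun k => u (k + 1)%Z) l.
Proof.
  intros (l1 & l2 & H1 & H2 & ->). exists (l1 - u 0%Z), (l2 + u 0%Z). split; [|split].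
  - eapply is_series_ext; [|apply (is_series_incr_1 (fun n => u (Z.of_nat n)))].
    + intros m. cbv beta. f_equal. lia.
    + match goal with |- is_series _ ?L => replace L with l1 by (cbn; ring) end.
      exact H1.
  - apply (is_series_decr_1 (fun n => u (- Z.of_nat (S n) + 1)%Z)).
    match goal with |- is_series _ ?L => replace L with l2 by (cbn; ring) end.
    eapply is_series_ext; [|exact H2].
    intros m. cbv beta. f_equal. lia.
  - ring.
Qed.

Lemma is_zseries_pred u l : is_zseries u l -> is_zseries (fun k => u (k - 1)%Z) l.
Proof.
  intros (l1 & l2 & H1 & H2 & ->). exists (l1 + u (-1)%Z), (l2 - u (-1)%Z). split; [|split].
  - apply (is_series_decr_1 (fun n => u (Z.of_nat n - 1)%Z)).
    match goal with |- is_series _ ?L => replace L with l1 by (cbn; ring) end.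
    eapply is_series_ext; [|exact H1].
    intros m. cbv beta. f_equal. lia.
  - eapply is_series_ext; [|apply (is_series_incr_1 (fun n => u (- Z.of_nat (S n))%Z))].
    + intros m. cbv beta. f_equal. lia.
    + match goal with |- is_series _ ?L => replace L with l2 by (cbn; ring) end.
      exact H2.
  - ring.
Qed.

Lemma is_zseries_shift u l (j : Z) : is_zseries u l -> is_zseries (fun k => u (k + j)%Z) l.
Proof.
  intros H. induction j as [|j IH|j IH] using Z.peano_ind.
  - eapply is_zseries_ext, H. intros k. cbv beta. f_equal. lia.
  - eapply is_zseries_ext, (is_zseries_succ _ _ IH). intros k. cbv beta. f_equal. lia.
  - eapply is_zseries_ext, (is_zseries_pred _ _ IH). intros k. cbv beta. f_equal. lia.
Qed.

Lemma is_series_geom_dominated (a : nat -> R) (C q : R) :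
  0 <= q < 1 -> (forall n, Rabs (a n) <= C * q ^ S n) ->
  exists l : R, is_series a l /\ Rabs l <= C * q / (1 - q).
Proof.
  intros Hq Ha.
  assert (Hg : is_series (fun n => C * q ^ S n) (C * q / (1 - q))).
  { apply (is_series_ext (fun n => scal (C * q) (q ^ n))); [intros m; cbn; unfold mult; cbn; ring|].
    unfold Rdiv. apply (is_series_scal_l (V := R_NormedModule)), is_series_geom.
    rewrite Rabs_pos_eq; lra. }
  assert (Habs : ex_series (fun n => Rabs (a n))).
  { apply (ex_series_le (V := R_CompleteNormedModule) _ (fun n => C * q ^ S n)).
    - intros m. cbn. unfold abs; cbn. rewrite Rabs_Rabsolu. apply Ha.
    - eexists. exact Hg. }
  exists (Series a). split; [apply Series_correct, ex_series_Rabs, Habs|].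
  eapply Rle_trans; [apply Series_Rabs, Habs|].
  rewrite <- (is_series_unique _ _ Hg).
  apply Series_le; [intros m; split; [apply Rabs_pos | apply Ha] | eexists; exact Hg].
Qed.

Lemma is_zseries_geom (u : Z -> R) (C q : R) :
  0 <= q < 1 -> (forall k, k <> 0%Z -> Rabs (u k) <= C * q ^ Z.abs_nat k) ->
  exists l : R, is_zseries u l /\ Rabs (l - u 0%Z) <= 2 * (C * q / (1 - q)).
Proof.
  intros Hq Hu.
  destruct (is_series_geom_dominated (fun n => u (Z.of_nat (S n))) C q Hq) as (l1 & H1 & B1).
  { intros m. replace (S m) with (Z.abs_nat (Z.of_nat (S m))) at 2 by lia. apply Hu. lia. }
  destruct (is_series_geom_dominated (fun n => u (- Z.of_nat (S n))%Z) C q Hq) as (l2 & H2 & B2).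
  { intros m. replace (S m) with (Z.abs_nat (- Z.of_nat (S m))) at 2 by lia. apply Hu. lia. }
  exists (u 0%Z + l1 + l2). split.
  - exists (u 0%Z + l1), l2. split; [|split]; [|exact H2|reflexivity].
    apply (is_series_decr_1 (fun n => u (Z.of_nat n))).
    match goal with |- is_series _ ?L => replace L with l1 by (cbn; ring) end.
    exact H1.
  - replace (u 0%Z + l1 + l2 - u 0%Z) with (l1 + l2) by ring.
    eapply Rle_trans; [apply Rabs_triang | lra].
Qed.

Lemma tanh_exp2 y : tanh y = (exp (2 * y) - 1) / (exp (2 * y) + 1).
Proof.
  unfold tanh, sinh, cosh. rewrite exp_Ropp.
  replace (2 * y) with (y + y) by ring. rewrite exp_plus.
  pose proof (exp_pos y). field. nra.
Qed.

Lemma Rabs_sgnZ_add_tanh k y : Rabs (sgnZ k + tanh y) <= 2 * exp (2 * sgnZ k * y).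
Proof.
  rewrite tanh_exp2. pose proof (exp_pos (2 * y)) as Hpos. unfold sgnZ.
  destruct k as [|p|p]; simpl Z.sgn.
  - rewrite Rplus_0_l, Rmult_0_r, Rmult_0_l, exp_0.
    rewrite Rabs_le_between. split; [apply Rle_div_r | apply Rle_div_l]; lra.
  - rewrite Rmult_1_r.
    replace (1 + (exp (2 * y) - 1) / (exp (2 * y) + 1))
      with (2 * exp (2 * y) / (exp (2 * y) + 1)) by (field; lra).
    rewrite Rabs_pos_eq by (apply Rle_div_r; lra).
    apply Rle_div_l; nra.
  - replace (2 * -1 * y) with (- (2 * y)) by ring. rewrite exp_Ropp.
    replace (-1 + (exp (2 * y) - 1) / (exp (2 * y) + 1))
      with (- (2 / (exp (2 * y) + 1))) by (field; lra).
    rewrite Rabs_Ropp, Rabs_pos_eq by (apply Rle_div_r; lra).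
    apply Rle_div_l; [lra|].
    replace (2 * / exp (2 * y) * (exp (2 * y) + 1)) with (2 + 2 * / exp (2 * y)) by (field; lra).
    pose proof (Rinv_0_lt_compat _ Hpos). lra.
Qed.

Definition kernel (tau t : R) (k : Z) : R := sgnZ k + tanh (tau * (t - IZR k)).

Lemma INR_Zabs_nat k : INR (Z.abs_nat k) = Rabs (IZR k).
Proof. now rewrite INR_IZR_INZ, Zabs2Nat.id_abs, abs_IZR. Qed.

Lemma pow_exp x N : exp x ^ N = exp (INR N * x).
Proof. rewrite <- Rpower_pow by apply exp_pos. unfold Rpower. now rewrite ln_exp. Qed.

Lemma exp_le x y : x <= y -> exp x <= exp y.
Proof. intros [H|H]; [left; now apply exp_increasing | now rewrite H]. Qed.

Lemma kernel_bound tau t k : 0 <= tau ->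
  Rabs (kernel tau t k) <= 2 * exp (2 * tau * Rabs t) * exp (-2 * tau) ^ Z.abs_nat k.
Proof.
  intros Htau. eapply Rle_trans; [apply Rabs_sgnZ_add_tanh|].
  rewrite pow_exp, (Rmult_assoc 2 (exp _)), <- exp_plus, INR_Zabs_nat.
  apply Rmult_le_compat_l; [lra|]. apply exp_le.
  pose proof (Rle_abs t). pose proof (Rle_abs (- t)). rewrite Rabs_Ropp in *.
  unfold sgnZ. destruct k as [|p|p]; simpl Z.sgn.
  - rewrite Rabs_R0. nra.
  - pose proof (IZR_lt 0 (Z.pos p) ltac:(lia)). rewrite (Rabs_pos_eq (IZR _)) by lra. nra.
  - pose proof (IZR_lt (Z.neg p) 0 ltac:(lia)). rewrite (Rabs_left (IZR _)) by lra. nra.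
Qed.

Section ConvolutionDominance.

Variables (psi : Z -> R) (K C q : R).
Hypotheses (HK : 1 <= K) (Hq : 0 <= q <= / 2) (HCq : C * q <= / 8) (Hpsi0 : 1 <= psi 0%Z)
  (Hpsi : forall m, m <> 0%Z -> Rabs (psi m) * K ^ Z.abs_nat m <= C * q ^ Z.abs_nat m).

Lemma convolution_dominance_halve (d : Z -> R) (B : R) :
  (forall k, Rabs (d k) <= B * K ^ Z.abs_nat k) ->
  (forall j, is_zseries (fun k => d k * psi (k - j)%Z) 0) ->
  forall j, Rabs (d j) <= B / 2 * K ^ Z.abs_nat j.
Proof.
  intros Hd Hconv j.
  set (X := B * K ^ Z.abs_nat j).
  assert (HB : 0 <= B) by (specialize (Hd 0%Z); simpl in Hd; pose proof (Rabs_pos (d 0%Z)); lra).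
  assert (HX : 0 <= X) by (apply Rmult_le_pos; [exact HB | apply pow_le; lra]).
  (* The equation at [j] balances [d j * psi 0] against a geometrically small tail. *)
  assert (Hshift : is_zseries (fun m => d (m + j)%Z * psi m) 0).
  { eapply is_zseries_ext, (is_zseries_shift _ _ j (Hconv j)).
    intros m. cbv beta. do 2 f_equal. lia. }
  destruct (is_zseries_geom (fun m => d (m + j)%Z * psi m) (X * C) q) as (l & Hl & Hbound);
    [lra| |].
  { intros m Hm. rewrite Rabs_mult.
    assert (Hdm : Rabs (d (m + j)%Z) <= X * K ^ Z.abs_nat m).
    { eapply Rle_trans; [apply Hd|]. unfold X. rewrite Rmult_assoc, <- pow_add.
      apply Rmult_le_compat_l; [exact HB | apply Rle_pow; [lra | lia]]. }
    apply Rle_trans with (X * (Rabs (psi m) * K ^ Z.abs_nat m)).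
    - rewrite (Rmult_comm (Rabs (psi m))), <- Rmult_assoc.
      apply Rmult_le_compat_r; [apply Rabs_pos | exact Hdm].
    - rewrite Rmult_assoc. apply Rmult_le_compat_l; [exact HX | apply Hpsi, Hm]. }
  assert (Hl0 : l = 0) by (rewrite <- (is_zseries_unique _ _ Hl); apply is_zseries_unique, Hshift).
  rewrite Hl0, Rminus_0_l, Rabs_Ropp, Rabs_mult, Z.add_0_l, (Rabs_pos_eq (psi 0%Z)) in Hbound
    by lra.
  assert (Hsmall : X * C * q / (1 - q) <= X / 4).
  { apply Rle_div_l; [lra|]. pose proof (Rmult_le_compat_l X _ _ HX HCq). nra. }
  pose proof (Rabs_pos (d j)).
  replace (B / 2 * K ^ Z.abs_nat j) with (X / 2) by (unfold X; field). nra.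
Qed.

Lemma convolution_dominance_zero (d : Z -> R) (B : R) :
  (forall k, Rabs (d k) <= B * K ^ Z.abs_nat k) ->
  (forall j, is_zseries (fun k => d k * psi (k - j)%Z) 0) ->
  forall k, d k = 0.
Proof.
  intros Hd Hconv k.
  assert (Hiter : forall N, Rabs (d k) <= B * K ^ Z.abs_nat k * (/ 2) ^ N).
  { intros N. revert k. induction N as [|N IH]; intros k.
    - rewrite pow_O, Rmult_1_r. apply Hd.
    - replace (B * K ^ Z.abs_nat k * (/ 2) ^ S N)
        with (B * (/ 2) ^ N / 2 * K ^ Z.abs_nat k) by (simpl; field).
      apply convolution_dominance_halve; [|exact Hconv].
      intros j. rewrite Rmult_comm, <- Rmult_assoc, (Rmult_comm _ B). apply IH. }
  assert (Hgeom : is_lim_seq (fun N => (/ 2) ^ N) 0)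
    by (apply is_lim_seq_geom; rewrite Rabs_pos_eq; lra).
  assert (Hlim := is_lim_seq_le _ _ _ _ Hiter (is_lim_seq_const (Rabs (d k)))
                    (is_lim_seq_scal_l _ (B * K ^ Z.abs_nat k) _ Hgeom)).
  simpl in Hlim. rewrite Rmult_0_r in Hlim.
  apply Rabs_eq_0. pose proof (Rabs_pos (d k)). lra.
Qed.

End ConvolutionDominance.

Section LinearRecurrence.

Variables (p : nat) (beta w : nat -> R).

(* A recurrence of order [S p] with initial terms [w 0, ..., w p];
   [recurrence_window m i] is the term of index [m + i], for [i <= p]. *)
Fixpoint recurrence_window (m : nat) : nat -> R :=
  match m with
  | O => w
  | S m' => fun i =>
      if (i <? p)%nat then recurrence_window m' (S i)
      else - sum_f_R0 (fun j => beta j * recurrence_window m' j) p / beta (S p)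
  end.

Definition recurrence_seq (m : nat) : R := recurrence_window m O.

Lemma recurrence_window_seq i m : (i <= p)%nat -> recurrence_window m i = recurrence_seq (m + i).
Proof.
  revert m. induction i as [|i IH]; intros m Hi.
  - now rewrite Nat.add_0_r.
  - replace (m + S i)%nat with (S m + i)%nat by lia. rewrite <- IH by lia.
    simpl. now replace (i <? p)%nat with true by (symmetry; apply Nat.ltb_lt; lia).
Qed.

Lemma recurrence_seq_init i : (i <= p)%nat -> recurrence_seq i = w i.
Proof.
  intros Hi. rewrite <- (Nat.add_0_l i), <- recurrence_window_seq by exact Hi. reflexivity.
Qed.

Hypothesis Hbeta : beta (S p) <> 0.

Lemma recurrence_seq_rec m :
  sum_f_R0 (fun j => beta j * recurrence_seq (m + j)) (S p) = 0.
Proof.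
  rewrite tech5. replace (m + S p)%nat with (S m + p)%nat by lia.
  rewrite <- recurrence_window_seq by lia. simpl.
  rewrite Nat.ltb_irrefl.
  rewrite (sum_eq _ (fun j => beta j * recurrence_window m j)).
  - field. exact Hbeta.
  - intros j Hj. now rewrite recurrence_window_seq.
Qed.

Lemma recurrence_seq_bound :
  (forall i, (i <= p)%nat -> Rabs (w i) <= 1) ->
  exists A, 1 <= A /\ forall m, Rabs (recurrence_seq m) <= A ^ m.
Proof.
  intros Hw. set (A := 1 + sum_f_R0 (fun j => Rabs (beta j)) p / Rabs (beta (S p))).
  assert (Hsum : 0 <= sum_f_R0 (fun j => Rabs (beta j)) p)
    by (apply cond_pos_sum; intros; apply Rabs_pos).
  assert (Htop : 0 < Rabs (beta (S p))) by (apply Rabs_pos_lt, Hbeta).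
  assert (HA : 1 <= A) by (unfold A; pose proof (Rdiv_le_0_compat _ _ Hsum Htop); lra).
  assert (Hwin : forall m i, (i <= p)%nat -> Rabs (recurrence_window m i) <= A ^ m).
  { induction m as [|m IH]; intros i Hi; simpl.
    - now apply Hw.
    - destruct (i <? p)%nat eqn:E.
      + apply Nat.ltb_lt in E. eapply Rle_trans; [apply IH; lia|].
        rewrite <- (Rmult_1_l (A ^ m)) at 1. apply Rmult_le_compat_r; [apply pow_le | ]; lra.
      + unfold Rdiv. rewrite Rabs_mult, Rabs_Ropp, Rabs_inv.
        apply Rle_trans with (sum_f_R0 (fun j => Rabs (beta j)) p * A ^ m * / Rabs (beta (S p))).
        * apply Rmult_le_compat_r; [left; apply Rinv_0_lt_compat, Htop|].
          eapply Rle_trans; [apply Rsum_abs|]. rewrite (Rmult_comm (sum_f_R0 _ _)), scal_sum.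
          apply sum_Rle. intros j Hj. rewrite Rabs_mult.
          apply Rmult_le_compat_l; [apply Rabs_pos | apply IH; lia].
        * replace (sum_f_R0 (fun j => Rabs (beta j)) p * A ^ m * / Rabs (beta (S p)))
            with ((A - 1) * A ^ m) by (unfold A; field; lra).
          pose proof (pow_le A m). nra. }
  exists A. split; [exact HA|]. intros m. apply Hwin. lia.
Qed.

End LinearRecurrence.

Lemma linear_recurrence_Z (n : nat) (beta w : nat -> R) :
  (0 < n)%nat -> beta 0%nat <> 0 -> beta n <> 0 ->
  (forall i, (i < n)%nat -> Rabs (w i) <= 1) ->
  exists (c : Z -> R) (M K : R), 1 <= K /\
    (forall i, (i < n)%nat -> c (Z.of_nat i) = w i) /\
    (forall k, sum_f_R0 (fun j => beta j * c (k + Z.of_nat j)%Z) n = 0) /\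
    (forall k, Rabs (c k) <= M * K ^ Z.abs_nat k).
Proof.
  intros Hn Hbot Htop Hw. destruct n as [|p]; [lia|].
  set (beta' := fun j => beta (S p - j)%nat).
  assert (Htop' : beta' (S p) <> 0) by (unfold beta'; now rewrite Nat.sub_diag).
  set (x := recurrence_seq p beta w).
  set (y := recurrence_seq p beta' (fun i => w (p - i)%nat)).
  set (c := fun k : Z => if (0 <=? k)%Z then x (Z.to_nat k) else y (Z.to_nat (Z.of_nat p - k))).
  assert (Hc_low : forall k, (k <= Z.of_nat p)%Z -> c k = y (Z.to_nat (Z.of_nat p - k))).
  { intros k Hk. unfold c. destruct (Z.leb_spec 0 k); [|reflexivity].
    unfold x, y. rewrite !recurrence_seq_init by lia. f_equal. lia. }
  destruct (recurrence_seq_bound p beta w Htop) as (A & HA & Hx); [intros; apply Hw; lia|].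
  destruct (recurrence_seq_bound p beta' (fun i => w (p - i)%nat) Htop') as (B & HB & Hy);
    [intros; apply Hw; lia|].
  set (K := Rmax A B).
  exists c, (K ^ p), K. split; [|split; [|split]].
  - eapply Rle_trans; [exact HA | apply Rmax_l].
  - intros i Hi. unfold c, x. rewrite (proj2 (Z.leb_le _ _)) by lia.
    rewrite recurrence_seq_init; [f_equal|]; lia.
  - intros k. destruct (Z.leb_spec 0 k) as [Hk|Hk].
    + rewrite <- (recurrence_seq_rec p beta w Htop (Z.to_nat k)). apply sum_eq.
      intros j Hj. unfold c, x. rewrite (proj2 (Z.leb_le _ _)) by lia. do 3 f_equal. lia.
    + rewrite <- (recurrence_seq_rec p beta' (fun i => w (p - i)%nat) Htop' (Z.to_nat (- k - 1))).
      rewrite <- sum_f_R0_skip.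
      apply sum_eq. intros j Hj. rewrite Hc_low by lia. unfold beta'.
      replace (S p - (S p - j))%nat with j by lia. unfold y. do 2 f_equal. lia.
  - intros k. rewrite <- pow_add. destruct (Z.leb_spec 0 k) as [Hk|Hk].
    + unfold c, x. rewrite (proj2 (Z.leb_le _ _)) by lia.
      eapply Rle_trans; [apply Hx|].
      eapply Rle_trans; [apply pow_incr; split; [lra | apply Rmax_l]|].
      apply Rle_pow; [eapply Rle_trans; [exact HA | apply Rmax_l] | lia].
    + rewrite Hc_low by lia.
      eapply Rle_trans; [apply Hy|].
      eapply Rle_trans; [apply pow_incr; split; [lra | apply Rmax_r]|].
      apply Rle_pow; [eapply Rle_trans; [exact HA | apply Rmax_l] | lia].
Qed.

Lemma sum_f_R0_single (f : nat -> R) (N p : nat) :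
  (p <= N)%nat -> (forall s, (s <= N)%nat -> s <> p -> f s = 0) -> sum_f_R0 f N = f p.
Proof.
  induction N as [|N IH]; intros Hp Hf; simpl.
  - now replace p with 0%nat by lia.
  - destruct (Nat.eq_dec p (S N)) as [->|Hne].
    + rewrite (sum_eq f (fun _ => 0)), sum_cte by (intros; apply Hf; lia). ring.
    + rewrite IH; [rewrite (Hf (S N)) by lia; ring | lia | intros; apply Hf; lia].
Qed.

Lemma shifted_sums_independent (n : nat) (c : Z -> R) (lam : nat -> R) :
  (forall i, (i < n)%nat -> c (Z.of_nat i) = if (i =? 0)%nat then 1 else 0) ->
  lam n = 0 ->
  (forall k, sum_f_R0 (fun s => lam s * c (k + Z.of_nat s)%Z) n = 0) ->
  forall s, (s <= n)%nat -> lam s = 0.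
Proof.
  intros Hc Htop Hd s. induction s as [s IH] using lt_wf_ind. intros Hs.
  destruct (Nat.eq_dec s n) as [->|Hsn]; [exact Htop|].
  specialize (Hd (- Z.of_nat s)%Z).
  rewrite (sum_f_R0_single _ n s) in Hd; [|lia|].
  - rewrite Z.add_opp_diag_l in Hd. change 0%Z with (Z.of_nat 0) in Hd.
    rewrite (Hc 0%nat) in Hd by lia. simpl in Hd. lra.
  - intros s' Hs' Hne. destruct (Nat.lt_ge_cases s' s) as [Hlt|Hge].
    + rewrite IH by lia. ring.
    + destruct (Nat.eq_dec s' n) as [->|Hs'n]; [rewrite Htop; ring|].
      replace (- Z.of_nat s + Z.of_nat s')%Z with (Z.of_nat (s' - s)) by lia.
      rewrite Hc by lia. replace (s' - s =? 0)%nat with false by (symmetry; apply Nat.eqb_neq; lia).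
      ring.
Qed.

Lemma is_series_RtoC (a : nat -> R) (l : R) :
  is_series a l -> is_series (fun n => RtoC (a n)) (RtoC l).
Proof.
  intros H.
  assert (Hsum : forall N, sum_n (fun n => RtoC (a n)) N = RtoC (sum_n a N)).
  { induction N as [|N IH].
    - now rewrite !sum_O.
    - rewrite !sum_Sn, IH. apply injective_projections; cbn; ring. }
  unfold is_series. eapply filterlim_ext; [intros N; symmetry; apply Hsum|].
  intros P [eps HP]. destruct (H (ball l eps) (locally_ball l eps)) as [N HN].
  exists N. intros m Hm. apply HP. split; [now apply HN | apply ball_center].
Qed.

Lemma csum_RtoC_mult (a f : nat -> R) (N : nat) :
  csum (fun s => Cmult (RtoC (a s)) (RtoC (f s))) (S N) = RtoC (sum_f_R0 (fun s => a s * f s) N).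
Proof.
  induction N as [|N IH]; simpl csum in *; simpl sum_f_R0.
  - apply injective_projections; cbn; ring.
  - rewrite IH. apply injective_projections; cbn; ring.
Qed.

Lemma csum_mult_RtoC_fst (lam : nat -> C) (f : nat -> R) (N : nat) :
  fst (csum (fun s => Cmult (lam s) (RtoC (f s))) (S N)) = sum_f_R0 (fun s => fst (lam s) * f s) N.
Proof.
  induction N as [|N IH]; [cbn; ring|].
  simpl csum in *. cbn [fst Cplus] in *. rewrite IH. cbn. ring.
Qed.

Lemma csum_mult_RtoC_snd (lam : nat -> C) (f : nat -> R) (N : nat) :
  snd (csum (fun s => Cmult (lam s) (RtoC (f s))) (S N)) = sum_f_R0 (fun s => snd (lam s) * f s) N.
Proof.
  induction N as [|N IH]; [cbn; ring|].
  simpl csum in *. cbn [snd Cplus] in *. rewrite IH. cbn. ring.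
Qed.

Section Sigma.

Variables (n : nat) (alpha : nat -> R) (c : Z -> R) (M K tau : R).
Hypotheses
  (Halpha : forall k, (k <= n)%nat -> alpha k <> 0)
  (Hc_init : forall i, (i < n)%nat -> c (Z.of_nat i) = if (i =? 0)%nat then 1 else 0)
  (Hc_rec : forall k, sum_f_R0 (fun j => alpha j * c (k + Z.of_nat j)%Z) n = 0)
  (Hc_bound : forall k, Rabs (c k) <= M * K ^ Z.abs_nat k)
  (HK : 1 <= K) (Htau : 64 * K ^ 2 <= exp tau).

Definition sigma (t : R) : R := zseries (fun k => c k * kernel tau t k).

Lemma M_nonneg : 0 <= M.
Proof. specialize (Hc_bound 0%Z). simpl in Hc_bound. pose proof (Rabs_pos (c 0%Z)). lra. Qed.

Lemma tau_pos : 0 < tau.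
Proof. apply exp_lt_inv. rewrite exp_0. nra. Qed.

Lemma decay_rate :
  0 <= K * exp (-2 * tau) <= / 2 /\ 4 * exp tau * (K * exp (-2 * tau)) <= / 8.
Proof.
  replace (-2 * tau) with (- (tau + tau)) by ring. rewrite exp_Ropp, exp_plus.
  pose proof (exp_pos tau). set (E := exp tau) in *.
  assert (HE : 64 * K <= E) by (assert (K <= K ^ 2) by (simpl; nra); lra).
  replace (4 * E * (K * / (E * E))) with (4 * K / E) by (field; lra).
  split; [split|].
  - apply Rmult_le_pos; [lra | left; apply Rinv_0_lt_compat; nra].
  - change (K / (E * E) <= / 2). apply Rle_div_l; nra.
  - apply Rle_div_l; lra.
Qed.

Lemma sigma_is_zseries t : is_zseries (fun k => c k * kernel tau t k) (sigma t).
Proof.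
  destruct decay_rate as [Hq _]. pose proof tau_pos. pose proof M_nonneg.
  destruct (is_zseries_geom (fun k => c k * kernel tau t k)
              (M * (2 * exp (2 * tau * Rabs t))) (K * exp (-2 * tau))) as (l & Hl & _);
    [lra| |].
  - intros k _. rewrite Rabs_mult, Rpow_mult_distr.
    replace (M * (2 * exp (2 * tau * Rabs t)) * (K ^ Z.abs_nat k * exp (-2 * tau) ^ Z.abs_nat k))
      with (M * K ^ Z.abs_nat k * (2 * exp (2 * tau * Rabs t) * exp (-2 * tau) ^ Z.abs_nat k))
      by ring.
    apply Rmult_le_compat; try apply Rabs_pos; [apply Hc_bound | apply kernel_bound; lra].
  - unfold sigma. now rewrite (is_zseries_unique _ _ Hl).
Qed.

Lemma kernel_shift t s k :
  kernel tau (t + INR s) (k + Z.of_nat s) = sgnZ (k + Z.of_nat s) + tanh (tau * (t - IZR k)).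
Proof. unfold kernel. rewrite plus_IZR, <- INR_IZR_INZ. do 3 f_equal. ring. Qed.

Lemma sigma_symmetry t :
  sum_f_R0 (fun s => alpha s * sigma (t + INR s)) n = sum_f_R0 (fun s => alpha s * sigma (INR s)) n.
Proof.
  assert (H : forall t, is_zseries
    (fun k => sum_f_R0 (fun s => alpha s * (c (k + Z.of_nat s)%Z * sgnZ (k + Z.of_nat s))) n)
    (sum_f_R0 (fun s => alpha s * sigma (t + INR s)) n)).
  { intros t'. eapply is_zseries_ext; [|apply is_zseries_sum; intros s _;
      apply (is_zseries_shift _ _ (Z.of_nat s) (sigma_is_zseries (t' + INR s)))].
    intros k. cbv beta.
    rewrite (sum_eq _ (fun s => alpha s * (c (k + Z.of_nat s)%Z * sgnZ (k + Z.of_nat s))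
                      + alpha s * c (k + Z.of_nat s)%Z * tanh (tau * (t' - IZR k))))
      by (intros s _; rewrite kernel_shift; ring).
    rewrite plus_sum, <- scal_sum, Hc_rec. ring. }
  rewrite <- (is_zseries_unique _ _ (H t)), (is_zseries_unique _ _ (H 0)).
  apply sum_eq. intros s _. now rewrite Rplus_0_l.
Qed.

(* [bump (k - j)] is the increment of the [k]-th summand of [sigma] over [[j - 1/2, j + 1/2]]. *)
Definition bump (m : Z) : R := kernel tau (/ 2) m - kernel tau (- / 2) m.

Lemma bump_center : 1 <= bump 0.
Proof.
  unfold bump, kernel, sgnZ. simpl. rewrite !Rplus_0_l, !Rminus_0_r, !tanh_exp2.
  replace (2 * (tau * / 2)) with tau by field.
  replace (2 * (tau * - / 2)) with (- tau) by field.
  rewrite exp_Ropp. pose proof (exp_pos tau). pose proof tau_pos.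
  assert (H64 : 64 <= exp tau) by nra.
  replace ((exp tau - 1) / (exp tau + 1) - (/ exp tau - 1) / (/ exp tau + 1))
    with (2 * (exp tau - 1) / (exp tau + 1)) by (field; lra).
  apply Rle_div_r; lra.
Qed.

Lemma bump_decay m :
  Rabs (bump m) * K ^ Z.abs_nat m <= 4 * exp tau * (K * exp (-2 * tau)) ^ Z.abs_nat m.
Proof.
  pose proof tau_pos.
  assert (Hb : Rabs (bump m) <= 4 * exp tau * exp (-2 * tau) ^ Z.abs_nat m).
  { unfold bump. eapply Rle_trans; [apply Rabs_triang|]. rewrite Rabs_Ropp.
    pose proof (kernel_bound tau (/ 2) m ltac:(lra)) as H1.
    pose proof (kernel_bound tau (- / 2) m ltac:(lra)) as H2.
    rewrite Rabs_Ropp in H2. rewrite (Rabs_pos_eq (/ 2)) in H1, H2 by lra.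
    replace (2 * tau * / 2) with tau in H1, H2 by field. lra. }
  rewrite Rpow_mult_distr.
  replace (4 * exp tau * (K ^ Z.abs_nat m * exp (-2 * tau) ^ Z.abs_nat m))
    with (4 * exp tau * exp (-2 * tau) ^ Z.abs_nat m * K ^ Z.abs_nat m) by ring.
  apply Rmult_le_compat_r; [apply pow_le; lra | exact Hb].
Qed.

Lemma relation_convolution (lam : nat -> R) (mu : R) :
  (forall t, mu + sum_f_R0 (fun s => lam s * sigma (t + INR s)) n = 0) ->
  forall j, is_zseries
    (fun k => sum_f_R0 (fun s => lam s * c (k + Z.of_nat s)%Z) n * bump (k - j)) 0.
Proof.
  intros Hrel j. set (a := IZR j + / 2). set (b := IZR j - / 2).
  set (u := fun s k => c (k + Z.of_nat s)%Z * kernel tau (a + INR s) (k + Z.of_nat s)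
                     - c (k + Z.of_nat s)%Z * kernel tau (b + INR s) (k + Z.of_nat s)).
  assert (Hzero : sum_f_R0 (fun s => lam s * (sigma (a + INR s) - sigma (b + INR s))) n = 0).
  { rewrite (sum_eq _ (fun s => lam s * sigma (a + INR s) - lam s * sigma (b + INR s)))
      by (intros; ring).
    rewrite minus_sum. pose proof (Hrel a). pose proof (Hrel b). lra. }
  rewrite <- Hzero. apply (is_zseries_ext (fun k => sum_f_R0 (fun s => lam s * u s k) n)).
  - intros k. rewrite (Rmult_comm _ (bump _)), scal_sum. apply sum_eq. intros s _.
    unfold u. rewrite !kernel_shift. unfold bump, kernel, a, b. rewrite minus_IZR.
    replace (tau * (IZR j + / 2 - IZR k)) with (tau * (/ 2 - (IZR k - IZR j))) by ring.
    replace (tau * (IZR j - / 2 - IZR k)) with (tau * (- / 2 - (IZR k - IZR j))) by ring.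
    ring.
  - apply is_zseries_sum. intros s _. apply is_zseries_minus;
      apply (is_zseries_shift _ _ (Z.of_nat s) (sigma_is_zseries _)).
Qed.

Lemma relation_trivial (lam : nat -> R) (mu : R) :
  lam n = 0 ->
  (forall t, mu + sum_f_R0 (fun s => lam s * sigma (t + INR s)) n = 0) ->
  (forall s, (s <= n)%nat -> lam s = 0) /\ mu = 0.
Proof.
  intros Htop Hrel.
  destruct decay_rate as [Hq HCq].
  assert (Hd : forall k, sum_f_R0 (fun s => lam s * c (k + Z.of_nat s)%Z) n = 0).
  { apply (convolution_dominance_zero bump K (4 * exp tau) (K * exp (-2 * tau)) HK Hq HCq
             bump_center (fun m _ => bump_decay m) _
             (sum_f_R0 (fun s => Rabs (lam s)) n * (M * K ^ n))).
    - intros k. eapply Rle_trans; [apply Rsum_abs|].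
      replace (sum_f_R0 (fun s => Rabs (lam s)) n * (M * K ^ n) * K ^ Z.abs_nat k)
        with (M * K ^ n * K ^ Z.abs_nat k * sum_f_R0 (fun s => Rabs (lam s)) n) by ring.
      rewrite scal_sum. apply sum_Rle. intros s Hs.
      rewrite Rabs_mult. apply Rmult_le_compat_l; [apply Rabs_pos|].
      eapply Rle_trans; [apply Hc_bound|]. rewrite !Rmult_assoc, <- pow_add.
      apply Rmult_le_compat_l; [apply M_nonneg | apply Rle_pow; [lra | lia]].
    - apply (relation_convolution lam mu Hrel). }
  assert (Hlam := shifted_sums_independent n c lam Hc_init Htop Hd).
  split; [exact Hlam|].
  specialize (Hrel 0). rewrite (sum_eq _ (fun _ => 0)), sum_cte in Hrel
    by (intros s Hs; rewrite Hlam by exact Hs; ring).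
  lra.
Qed.

Lemma relation_vanishes (lam : nat -> R) (mu : R) (s0 : nat) :
  (s0 <= n)%nat -> lam s0 = 0 ->
  (forall t, mu + sum_f_R0 (fun s => lam s * sigma (t + INR s)) n = 0) ->
  (forall s, (s <= n)%nat -> lam s = 0) /\ mu = 0.
Proof.
  intros Hs0 Hlam0 Hrel.
  set (kappa := lam n / alpha n).
  set (zeta := sum_f_R0 (fun s => alpha s * sigma (INR s)) n).
  destruct (relation_trivial (fun s => lam s - kappa * alpha s) (mu + kappa * zeta))
    as [Hlam Hmu].
  - unfold kappa. field. apply Halpha. lia.
  - intros t. specialize (Hrel t).
    rewrite (sum_eq _ (fun s => lam s * sigma (t + INR s) - alpha s * sigma (t + INR s) * kappa))
      by (intros; ring).
    rewrite minus_sum, <- scal_sum, sigma_symmetry. fold zeta. lra.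
  - assert (Hkappa : kappa = 0).
    { specialize (Hlam s0 Hs0). rewrite Hlam0 in Hlam.
      destruct (Rmult_integral kappa (alpha s0)) as [H|H]; [lra | exact H |].
      exfalso. exact (Halpha s0 Hs0 H). }
    rewrite Hkappa in Hlam, Hmu. split; [|lra].
    intros s Hs. specialize (Hlam s Hs). lra.
Qed.

Lemma sigma_in_Sigma : (0 < n)%nat -> in_Sigma 1 (PI / tau) (fun t => RtoC (sigma t)).
Proof.
  intros Hn. pose proof tau_pos. pose proof PI_RGT_0. pose proof M_nonneg.
  split; [lra|]. split; [now apply Rdiv_lt_0_compat|].
  exists (RtoC 0), (fun k => RtoC (c k)). split; [|split].
  - exists (/ 2). split; [lra|]. exists M. intros k. rewrite Cmod_R.
    replace (- PI * / 2 * IZR (Z.abs k) / (PI / tau)) with (INR (Z.abs_nat k) * (- tau / 2))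
      by (rewrite INR_Zabs_nat, abs_IZR; field; lra).
    rewrite <- pow_exp.
    assert (Hratio : 0 <= K * exp (- tau / 2) <= 1).
    { replace (- tau / 2) with (- (tau / 2)) by field. rewrite exp_Ropp.
      pose proof (exp_pos (tau / 2)) as Hpos.
      assert (Hsq : exp (tau / 2) * exp (tau / 2) = exp tau)
        by (rewrite <- exp_plus; f_equal; field).
      split; [apply Rmult_le_pos; [lra | left; now apply Rinv_0_lt_compat]|].
      apply Rle_div_l; [lra|]. simpl in Htau. nra. }
    apply Rle_trans with (M * (K * exp (- tau / 2)) ^ Z.abs_nat k).
    + rewrite Rpow_mult_distr, <- Rmult_assoc.
      apply Rmult_le_compat_r; [apply pow_le; left; apply exp_pos | apply Hc_bound].
    + rewrite <- (Rmult_1_r M) at 2. apply Rmult_le_compat_l; [lra|].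
      rewrite <- (pow1 (Z.abs_nat k)). now apply pow_incr.
  - exists 0%Z. change 0%Z with (Z.of_nat 0). rewrite Hc_init by exact Hn.
    intros H01. injection H01. lra.
  - intros t. exists (RtoC (sigma t)). split; [|now rewrite Cplus_0_l].
    destruct (sigma_is_zseries t) as (l1 & l2 & Hl1 & Hl2 & Hl).
    assert (Hterm : forall k, sigma_term 1 (PI / tau) (fun k => RtoC (c k)) t k
                              = RtoC (c k * kernel tau t k)).
    { intros k. unfold sigma_term, kernel. rewrite Rmult_1_r, RtoC_mult. do 4 f_equal. field. lra. }
    exists (RtoC l1), (RtoC l2). split; [|split].
    + eapply is_series_ext; [|apply is_series_RtoC, Hl1]. intros m. symmetry. apply Hterm.
    + eapply is_series_ext; [|apply is_series_RtoC, Hl2]. intros m. symmetry. apply Hterm.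
    + now rewrite Hl, RtoC_plus.
Qed.

Lemma sigma_affine_symmetry :
  affine_symmetry (fun t => RtoC (sigma t)) (sum_f_R0 (fun s => alpha s * sigma (INR s)) n)
    (S n) alpha (fun _ => 1) INR.
Proof.
  split; [lia|split].
  - intros t. now rewrite csum_RtoC_mult, Rmult_1_l, sigma_symmetry.
  - intros (P & _ & (s0 & Hs0 & HPs0) & lam & mu & Hout & Hnz & Hrel).
    assert (Hlam0 : lam s0 = RtoC 0) by (apply Hout, HPs0).
    destruct (relation_vanishes (fun s => fst (lam s)) (fst mu) s0) as [Hre Hmu1];
      [lia | now rewrite Hlam0 | |].
    { intros t. pose proof (f_equal fst (Hrel t)) as E. cbn [fst Cplus] in E.
      now rewrite csum_mult_RtoC_fst, Rmult_1_l in E. }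
    destruct (relation_vanishes (fun s => snd (lam s)) (snd mu) s0) as [Him Hmu2];
      [lia | now rewrite Hlam0 | |].
    { intros t. pose proof (f_equal snd (Hrel t)) as E. cbn [snd Cplus] in E.
      now rewrite csum_mult_RtoC_snd, Rmult_1_l in E. }
    destruct Hnz as [Hmu | (s & Hs & _ & Hls)].
    + apply Hmu, injective_projections; assumption.
    + apply Hls, injective_projections; [apply Hre | apply Him]; lia.
Qed.

End Sigma.

Theorem proposition3 (n : nat) (alpha : nat -> R) :
  (1 <= n)%nat ->
  (forall k : nat, (k <= n)%nat -> alpha k <> 0) ->
  exists (b zeta : R) (sigma : R -> C),
    0 < b /\ in_Sigma 1 b sigma /\
    affine_symmetry sigma zeta (S n) alpha (fun _ => 1) (fun k => INR k).
Proof.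
  intros Hn Halpha.
  destruct (linear_recurrence_Z n alpha (fun i => if (i =? 0)%nat then 1 else 0))
    as (c & M & K & HK & Hinit & Hrec & Hbound); [lia | apply Halpha; lia | apply Halpha; lia | |].
  { intros i _. destruct (i =? 0)%nat; rewrite ?Rabs_R1, ?Rabs_R0; lra. }
  set (tau := ln (64 * K ^ 2)).
  assert (Htau : 64 * K ^ 2 <= exp tau) by (unfold tau; rewrite exp_ln; [lra | simpl; nra]).
  exists (PI / tau), (sum_f_R0 (fun s => alpha s * sigma c tau (INR s)) n),
    (fun t => RtoC (sigma c tau t)).
  split; [|split].
  - apply Rdiv_lt_0_compat; [apply PI_RGT_0 | exact (tau_pos K tau HK Htau)].
  - exact (sigma_in_Sigma n c M K tau Hinit Hbound HK Htau Hn).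
  - exact (sigma_affine_symmetry n alpha c M K tau Halpha Hinit Hrec Hbound HK Htau).
Qed.
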